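(* Let $T>0$, and let $u$ be a (sufficiently smooth) solution of the linear wave equation $\partial_t^2u-\Delta u=F(x,t)$ on $\mathbb R^3\times[0,T]$ with $u(\cdot,0)=u_0$, $\partial_tu(\cdot,0)=u_1$, where $u_0,u_1,F$ are radial in $x$. Suppose there are constants $R,A_1,B_1>0$ and $0<\alpha,\beta<1/2$ such that \[ |u_0(x)|\le A_1|x|^{-1-\alpha},\quad |F(x,t)|\le B_1|x|^{-3}(|x|-t)^{-\beta}\quad\text{whenever }|x|>R\ (\text{and }t\in[0,T]), \] \[ \int_{|x|>R}|x|^{1+2\alpha}|u_1(x)|^2\,dx\le A_1^2. \] Then there is a constant $C=C(\alpha,\beta)\ge1$ such that \[ |u(x,t)|\le C|x|^{-1}\big[A_1(|x|-t)^{-\alpha}+B_1(|x|-t)^{-\beta}\big]\qquad\text{for all }t\in[0,T],\ |x|>R+t. \] *)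

From Stdlib Require Import Reals Lra.
Open Scope R_scope.

(* Radial functions on R^3 (x t) are represented by their radial profiles
   g(r, t), r = |x| > 0, i.e. g(|x|,t) is the value at x. *)

Definition cont2 (g : R -> R -> R) (r t : R) : Prop :=
  forall eps, 0 < eps -> exists delta, 0 < delta /\
    forall r' t', Rabs (r' - r) < delta -> Rabs (t' - t) < delta ->
      Rabs (g r' t' - g r t) < eps.

Definition C2_profile (v vr vt vrr vrt vtt : R -> R -> R) : Prop :=
  forall r t, 0 < r ->
    derivable_pt_lim (fun s => v s t) r (vr r t) /\
    derivable_pt_lim (fun s => v r s) t (vt r t) /\
    derivable_pt_lim (fun s => vr s t) r (vrr r t) /\
    derivable_pt_lim (fun s => vr r s) t (vrt r t) /\
    derivable_pt_lim (fun s => vt s t) r (vrt r t) /\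
    derivable_pt_lim (fun s => vt r s) t (vtt r t) /\
    cont2 v r t /\ cont2 vr r t /\ cont2 vt r t /\
    cont2 vrr r t /\ cont2 vrt r t /\ cont2 vtt r t.

Definition radial_laplacian (vr vrr : R -> R -> R) (r t : R) : R :=
  vrr r t + 2 / r * vr r t.

From Stdlib Require Import Reals Lra.
From Coquelicot Require Import Coquelicot.
Open Scope R_scope.

(* For a radial solution, [w = r v] solves the one-dimensional equation
   [w_tt - w_rr = r F], and d'Alembert's formula along the two characteristics
   through (r, t) writes [2 w(r, t)] as [(r - t) u0(r - t) + (r + t) u0(r + t)] plus
   contributions of [u1] and [F], each bounded by the mean value inequality against
   an explicit majorant.  Along an incoming
   characteristic ending at (xi, 0), [(d_r + d_t) w] varies by at most
   [2 B1 xi^(-1-beta) / (1 - beta)] because of the decay of [F]; integrating this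
   along the outgoing characteristic gives the [B1 (r - t)^(-beta)] term.  The [u1]
   term is bounded by Young's inequality
   [|y u1(y)| <= lam y^(3+2 alpha) u1(y)^2 / 2 + y^(-1-2 alpha) / (2 lam)]
   with [lam = (r - t)^(-alpha) / A1], which turns the weighted energy bound on [u1]
   into [A1 (r - t)^(-alpha)]. *)

Lemma Rpower_gt_0 x y : 0 < Rpower x y.
Proof. apply exp_pos. Qed.

Lemma Rpower_sub_1 x y : 0 < x -> Rpower x (y - 1) = Rpower x y / x.
Proof.
intros hx. unfold Rminus. rewrite Rpower_plus, Rpower_Ropp, Rpower_1 by exact hx.
reflexivity.
Qed.

Lemma Rpower_opp_le x y e : 0 <= e -> 0 < x <= y -> Rpower y (- e) <= Rpower x (- e).
Proof.
intros he hxy. rewrite !Rpower_Ropp.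
apply Rinv_le_contravar; [apply Rpower_gt_0 | apply Rle_Rpower_l; lra].
Qed.

Lemma Rabs_le_young z mu : 0 < mu -> Rabs z <= mu * z ^ 2 / 2 + / (2 * mu).
Proof.
intros hmu. rewrite <- pow2_abs.
assert (hsq : 0 <= (mu * Rabs z - 1) ^ 2 / (2 * mu))
  by (apply Rdiv_le_0_compat; [apply pow2_ge_0 | lra]).
replace ((mu * Rabs z - 1) ^ 2 / (2 * mu))
  with (mu * Rabs z ^ 2 / 2 + / (2 * mu) - Rabs z) in hsq by (field; lra).
lra.
Qed.

Lemma Rabs_sub_le_of_between x u c :
  Rmin x u <= c <= Rmax x u -> Rabs (c - x) <= Rabs (u - x).
Proof.
unfold Rmin, Rmax; destruct Rle_dec; intros; unfold Rabs;
  repeat destruct Rcase_abs; lra.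
Qed.

Lemma Rabs_sub_le_majorant (F F' G G' : R -> R) a b : a <= b ->
  (forall c, a <= c <= b -> derivable_pt_lim F c (F' c)) ->
  (forall c, a <= c <= b -> derivable_pt_lim G c (G' c)) ->
  (forall c, a <= c <= b -> Rabs (F' c) <= G' c) ->
  Rabs (F b - F a) <= G b - G a.
Proof.
intros hab hF hG hFG.
destruct (Rle_lt_or_eq_dec a b hab) as [hlt | <-];
  [| rewrite Rminus_diag, Rabs_R0; lra].
assert (hincr : forall s, Rabs s = 1 -> 0 <= G b - G a + s * (F b - F a)).
{ intros s hs.
  destruct (MVT_cor2 (fun x => G x + s * F x) (fun x => G' x + s * F' x) a b)
    as [c [hc hcab]];
    [exact hlt | intros c hc; apply derivable_pt_lim_plus;
                 [| apply derivable_pt_lim_scal]; auto |].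
  assert (hsF : Rabs (s * F' c) <= G' c)
    by (rewrite Rabs_mult, hs, Rmult_1_l; apply hFG; lra).
  pose proof (Rabs_maj2 (s * F' c)).
  replace (G b - G a + s * (F b - F a)) with (G b + s * F b - (G a + s * F a)) by ring.
  rewrite hc. apply Rmult_le_pos; lra. }
apply Rabs_le. split.
- assert (h := hincr 1 ltac:(apply Rabs_R1)). lra.
- assert (h := hincr (-1) ltac:(unfold Rabs; destruct Rcase_abs; lra)). lra.
Qed.

Lemma differentiable_pt_lim_of_partials (g gx : R -> R -> R) (gy x y : R) :
  locally_2d (fun u v => derivable_pt_lim (fun s => g s v) u (gx u v)) x y ->
  derivable_pt_lim (fun s => g x s) y gy ->
  cont2 gx x y ->
  differentiable_pt_lim g x y (gx x y) gy.
Proof.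
intros [d0 hd0] hgy hgx eps.
destruct (hgx (eps / 2)) as [d1 [hd1 hgx1]]; [apply is_pos_div_2 |].
destruct (hgy (eps / 2)) as [d2 hgy2]; [apply is_pos_div_2 |].
assert (hd : 0 < Rmin d0 (Rmin d1 d2))
  by (repeat apply Rmin_pos; auto using cond_pos).
exists (mkposreal _ hd); simpl; intros u v hu hv.
pose proof (Rmin_l d0 (Rmin d1 d2)); pose proof (Rmin_r d0 (Rmin d1 d2)).
pose proof (Rmin_l d1 d2); pose proof (Rmin_r d1 d2).
assert (along_x : Rabs (g u v - g x v - gx x y * (u - x)) <= eps / 2 * Rabs (u - x)).
{ destruct (MVT_abs (fun s => g s v - gx x y * s) (fun s => gx s v - gx x y) x u)
    as [c [hc hcxu]].
  - intros c hc. apply derivable_pt_lim_minus.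
    + apply Rabs_sub_le_of_between in hc. apply hd0; lra.
    + rewrite <- (Rmult_1_r (gx x y)) at 2.
      apply derivable_pt_lim_scal, derivable_pt_lim_id.
  - replace (g u v - g x v - gx x y * (u - x))
      with (g u v - gx x y * u - (g x v - gx x y * x)) by ring.
    rewrite hc. apply Rmult_le_compat_r; [apply Rabs_pos |].
    apply Rabs_sub_le_of_between in hcxu. left; apply hgx1; lra. }
assert (along_y : Rabs (g x v - g x y - gy * (v - y)) <= eps / 2 * Rabs (v - y)).
{ destruct (Req_dec v y) as [-> | hvy].
  - replace (g x y - g x y - gy * (y - y)) with 0 by ring.
    rewrite Rabs_R0, Rminus_diag, Rabs_R0; lra.
  - assert (hq := hgy2 (v - y) ltac:(lra) ltac:(lra)).
    replace (y + (v - y)) with v in hq by ring.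
    replace (g x v - g x y - gy * (v - y))
      with (((g x v - g x y) / (v - y) - gy) * (v - y)) by (field; lra).
    rewrite Rabs_mult. apply Rmult_le_compat_r; [apply Rabs_pos | lra]. }
replace (g u v - g x y - (gx x y * (u - x) + gy * (v - y)))
  with ((g u v - g x v - gx x y * (u - x)) + (g x v - g x y - gy * (v - y))) by ring.
eapply Rle_trans; [apply Rabs_triang |].
pose proof (Rmax_l (Rabs (u - x)) (Rabs (v - y))).
pose proof (Rmax_r (Rabs (u - x)) (Rabs (v - y))).
pose proof (cond_pos eps). nra.
Qed.

Lemma locally_2d_of_pos (P : R -> R -> Prop) r t : 0 < r ->
  (forall u s, 0 < u -> P u s) -> locally_2d P r t.
Proof.
intros hr hP. exists (mkposreal r hr); simpl; intros u s hu _.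
apply hP. unfold Rabs in hu; destruct Rcase_abs in hu; lra.
Qed.

Lemma C2_profile_differentiable v vr vt vrr vrt vtt :
  C2_profile v vr vt vrr vrt vtt -> forall r t, 0 < r ->
  differentiable_pt_lim v r t (vr r t) (vt r t) /\
  differentiable_pt_lim vr r t (vrr r t) (vrt r t) /\
  differentiable_pt_lim vt r t (vrt r t) (vtt r t).
Proof.
intros hv r t hr.
destruct (hv r t hr) as (_ & hvt & _ & hvrt & _ & hvtt & _ & hcr & _ & hcrr & hcrt & _).
repeat split; apply differentiable_pt_lim_of_partials; auto;
  apply locally_2d_of_pos; auto; intros u s hu; apply (hv u s hu).
Qed.

Lemma derivable_pt_lim_RInt (h : R -> R) a x : 0 < a -> 0 < x ->
  (forall z, 0 < z -> continuous h z) ->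
  derivable_pt_lim (fun y => RInt h a y) x (h x).
Proof.
intros ha hx hh. apply is_derive_Reals.
apply (is_derive_RInt h _ a); [| exact (hh x hx)].
apply (filter_imp (fun y => 0 < y)); [| exact (open_gt 0 x hx)].
intros y hy. apply (RInt_correct (V := R_CompleteNormedModule)).
apply (ex_RInt_continuous (V := R_CompleteNormedModule)); intros z hz; apply hh.
assert (0 < Rmin a y) by (apply Rmin_pos; lra). lra.
Qed.

Section RadialWave.

Variables v vr vt vrr vrt vtt f : R -> R -> R.
Variable T : R.
Hypothesis hv : C2_profile v vr vt vrr vrt vtt.
Hypothesis hpde : forall r t, 0 < r -> 0 <= t <= T ->
  vtt r t - radial_laplacian vr vrr r t = f r t.

(* [(d_r + d_t) (r v)]; it varies along incoming characteristics only through [f]. *)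
Definition outgoing_derivative r t := v r t + r * vr r t + r * vt r t.

Lemma outgoing_derivative_incoming xi eta : 0 < eta <= xi -> xi - eta <= 2 * T ->
  derivable_pt_lim (fun e => outgoing_derivative ((xi + e) / 2) ((xi - e) / 2)) eta
    (- ((xi + eta) / 4 * f ((xi + eta) / 2) ((xi - eta) / 2))).
Proof.
intros heta hT.
assert (dr : derivable_pt_lim (fun e => (xi + e) / 2) eta (/ 2))
  by (apply is_derive_Reals; auto_derive; [exact I | ring]).
assert (dt : derivable_pt_lim (fun e => (xi - e) / 2) eta (- / 2))
  by (apply is_derive_Reals; auto_derive; [exact I | ring]).
set (r := (xi + eta) / 2); set (t := (xi - eta) / 2).
assert (hr : 0 < r) by (unfold r; lra).
destruct (C2_profile_differentiable _ _ _ _ _ _ hv r t hr) as (dv & dvr & dvt).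
pose proof (fun g gr gt (H : differentiable_pt_lim g r t gr gt) =>
  derivable_pt_lim_comp_2d g (fun e => (xi + e) / 2) (fun e => (xi - e) / 2)
    eta gr gt _ _ H dr dt) as along.
pose proof (derivable_pt_lim_plus _ _ _ _ _
  (derivable_pt_lim_plus _ _ _ _ _ (along _ _ _ dv)
     (derivable_pt_lim_mult _ _ _ _ _ dr (along _ _ _ dvr)))
  (derivable_pt_lim_mult _ _ _ _ _ dr (along _ _ _ dvt))) as H.
refine (eq_ind _ (derivable_pt_lim _ eta) H _ _).
fold r t. rewrite <- hpde by (unfold t; lra).
unfold radial_laplacian, r. field. lra.
Qed.

(* [2 r v] along the outgoing characteristic [r - t = a], minus [y v(y, 0)]; its
   increment over [[a, b]] is the part of d'Alembert's formula for [2 r v] at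
   [((a + b) / 2, (b - a) / 2)] not coming from the initial displacement. *)
Definition outgoing_remainder a y := (y + a) * v ((y + a) / 2) ((y - a) / 2) - y * v y 0.

Lemma outgoing_remainder_deriv a y : 0 < a <= y ->
  derivable_pt_lim (outgoing_remainder a) y
    (outgoing_derivative ((y + a) / 2) ((y - a) / 2) - outgoing_derivative y 0
     + y * vt y 0).
Proof.
intros hay.
assert (dr : derivable_pt_lim (fun e => (e + a) / 2) y (/ 2))
  by (apply is_derive_Reals; auto_derive; [exact I | ring]).
assert (dt : derivable_pt_lim (fun e => (e - a) / 2) y (/ 2))
  by (apply is_derive_Reals; auto_derive; [exact I | ring]).
assert (dsum : derivable_pt_lim (fun e => e + a) y 1)
  by (apply is_derive_Reals; auto_derive; [exact I | ring]).
assert (hr : 0 < (y + a) / 2) by lra.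
destruct (C2_profile_differentiable _ _ _ _ _ _ hv _ ((y - a) / 2) hr) as (dv & _).
pose proof (derivable_pt_lim_minus _ _ _ _ _
  (derivable_pt_lim_mult _ _ _ _ _ dsum
     (derivable_pt_lim_comp_2d v (fun e => (e + a) / 2) (fun e => (e - a) / 2)
        y _ _ _ _ dv dr dt))
  (derivable_pt_lim_mult _ _ _ _ _ (derivable_pt_lim_id y) (proj1 (hv y 0 ltac:(lra)))))
  as H.
refine (eq_ind _ (derivable_pt_lim _ y) H _ _).
unfold outgoing_derivative, id. field.
Qed.

Variables R0 B1 beta : R.
Hypothesis hR0 : 0 < R0.
Hypothesis hB1 : 0 < B1.
Hypothesis hbeta : 0 < beta < 1.
Hypothesis hf : forall r t, R0 < r -> 0 <= t <= T -> t < r ->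
  Rabs (f r t) <= B1 * Rpower r (-3) * Rpower (r - t) (- beta).

Lemma incoming_source_bound xi e : R0 < e <= xi -> xi - e <= 2 * T ->
  Rabs ((xi + e) / 4 * f ((xi + e) / 2) ((xi - e) / 2))
    <= 2 * B1 / xi ^ 2 * Rpower e (- beta).
Proof.
intros he hT.
set (r := (xi + e) / 2).
assert (hfr := hf r ((xi - e) / 2) ltac:(unfold r; lra) ltac:(lra) ltac:(unfold r; lra)).
replace (r - (xi - e) / 2) with e in hfr by (unfold r; field).
replace (-3) with (- INR 3) in hfr by (simpl; ring).
rewrite Rpower_Ropp, Rpower_pow in hfr by (unfold r; lra).
assert (hE := Rpower_gt_0 e (- beta)).
replace ((xi + e) / 4) with (r / 2) by (unfold r; field).
rewrite Rabs_mult, (Rabs_right (r / 2)) by (unfold r; lra).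
apply Rle_trans with (r / 2 * (B1 * / r ^ 3 * Rpower e (- beta)));
  [apply Rmult_le_compat_l; [unfold r |]; lra |].
replace (r / 2 * (B1 * / r ^ 3 * Rpower e (- beta)))
  with (B1 * Rpower e (- beta) * / (2 * r ^ 2)) by (field; unfold r; lra).
replace (2 * B1 / xi ^ 2 * Rpower e (- beta))
  with (B1 * Rpower e (- beta) * / (xi ^ 2 / 2)) by (field; lra).
apply Rmult_le_compat_l; [nra |].
apply Rinv_le_contravar; [nra | unfold r; nra].
Qed.

Lemma outgoing_derivative_incoming_bound a xi : R0 < a <= xi -> xi - a <= 2 * T ->
  Rabs (outgoing_derivative ((xi + a) / 2) ((xi - a) / 2) - outgoing_derivative xi 0)
    <= 2 * B1 / (1 - beta) * (Rpower xi (- beta) / xi).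
Proof.
intros ha hT.
assert (hxi : 0 < xi) by lra.
set (G e := 2 * B1 / xi ^ 2 / (1 - beta) * Rpower e (1 - beta)).
assert (hGa : 0 <= G a).
{ unfold G. pose proof (Rpower_gt_0 a (1 - beta)).
  apply Rmult_le_pos; [unfold Rdiv; repeat apply Rmult_le_pos |]; try lra.
  - left; apply Rinv_0_lt_compat; nra.
  - left; apply Rinv_0_lt_compat; lra. }
assert (hGxi : G xi = 2 * B1 / (1 - beta) * (Rpower xi (- beta) / xi)).
{ unfold G. replace (1 - beta) with (- beta + 1) at 2 by ring.
  rewrite Rpower_plus, Rpower_1 by exact hxi. field. lra. }
rewrite Rabs_minus_sym, <- hGxi.
replace (outgoing_derivative xi 0)
  with (outgoing_derivative ((xi + xi) / 2) ((xi - xi) / 2)) by (f_equal; field).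
apply Rle_trans with (G xi - G a); [| lra].
apply (Rabs_sub_le_majorant (fun e => outgoing_derivative ((xi + e) / 2) ((xi - e) / 2))
  (fun e => - ((xi + e) / 4 * f ((xi + e) / 2) ((xi - e) / 2))) _
  (fun e => 2 * B1 / xi ^ 2 * Rpower e (- beta))); [lra | | |].
- intros e he. apply outgoing_derivative_incoming; lra.
- intros e he. unfold G.
  refine (eq_ind _ (derivable_pt_lim _ e)
    (derivable_pt_lim_scal _ _ _ _ (derivable_pt_lim_power e (1 - beta) ltac:(lra))) _ _).
  replace (1 - beta - 1) with (- beta) by ring. field. lra.
- intros e he. rewrite Rabs_Ropp. apply incoming_source_bound; lra.
Qed.

Variable alpha : R.
Hypothesis halpha : 0 < alpha.

Definition velocity_energy_density y := Rpower y (3 + 2 * alpha) * vt y 0 ^ 2.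

Lemma velocity_energy_density_continuous z : 0 < z -> continuous velocity_energy_density z.
Proof.
intros hz.
apply (ex_derive_continuous (K := R_AbsRing) (V := R_NormedModule)).
eexists. apply is_derive_Reals. unfold velocity_energy_density.
apply derivable_pt_lim_mult; [apply derivable_pt_lim_power; lra |].
apply (derivable_pt_lim_comp (fun y => vt y 0) (fun x => x ^ 2)).
- apply (hv z 0 hz).
- apply derivable_pt_lim_pow.
Qed.

Lemma ex_RInt_velocity_energy_density M : R0 <= M ->
  ex_RInt velocity_energy_density R0 M.
Proof.
intros hM. apply (ex_RInt_continuous (V := R_CompleteNormedModule)); intros z hz.
apply velocity_energy_density_continuous.
assert (R0 <= Rmin R0 M) by (apply Rmin_glb; lra). lra.
Qed.

Lemma outgoing_remainder_deriv_bound lam a y : 0 < lam -> R0 < a <= y -> y - a <= 2 * T ->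
  Rabs (outgoing_derivative ((y + a) / 2) ((y - a) / 2) - outgoing_derivative y 0
        + y * vt y 0)
  <= lam / 2 * velocity_energy_density y + / (2 * lam) * (Rpower y (- (2 * alpha)) / y)
     + 2 * B1 / (1 - beta) * (Rpower y (- beta) / y).
Proof.
intros hlam hay hT.
set (q := Rpower y (1 + 2 * alpha)).
assert (hq : 0 < q) by apply Rpower_gt_0.
assert (hdensity : velocity_energy_density y = q * (y * vt y 0) ^ 2).
{ unfold velocity_energy_density, q.
  replace (3 + 2 * alpha) with (INR 2 + (1 + 2 * alpha)) by (simpl; ring).
  rewrite Rpower_plus, Rpower_pow by lra. ring. }
assert (hweight : Rpower y (- (2 * alpha)) / y = / q).
{ unfold q. rewrite Rpower_plus, Rpower_1, Rpower_Ropp by lra.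
  field. split; apply Rgt_not_eq; [apply Rpower_gt_0 | lra]. }
assert (hyoung := Rabs_le_young (y * vt y 0) (lam * q) ltac:(nra)).
assert (hin := outgoing_derivative_incoming_bound a y hay hT).
eapply Rle_trans; [apply Rabs_triang |].
rewrite hdensity, hweight.
replace (lam / 2 * (q * (y * vt y 0) ^ 2) + / (2 * lam) * / q)
  with (lam * q * (y * vt y 0) ^ 2 / 2 + / (2 * (lam * q))) by (field; lra).
lra.
Qed.

Lemma outgoing_remainder_increment_bound lam a b : 0 < lam -> R0 < a <= b -> b - a <= 2 * T ->
  Rabs (outgoing_remainder a b - outgoing_remainder a a)
  <= lam / 2 * RInt velocity_energy_density R0 b
     + / (4 * alpha * lam) * Rpower a (- (2 * alpha))
     + 2 * B1 / (beta * (1 - beta)) * Rpower a (- beta).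
Proof.
intros hlam hab hT.
set (h := velocity_energy_density).
set (G y := lam / 2 * RInt h R0 y - / (4 * alpha * lam) * Rpower y (- (2 * alpha))
            - 2 * B1 / (beta * (1 - beta)) * Rpower y (- beta)).
apply Rle_trans with (G b - G a).
- apply (Rabs_sub_le_majorant (outgoing_remainder a) (fun y =>
    outgoing_derivative ((y + a) / 2) ((y - a) / 2) - outgoing_derivative y 0
    + y * vt y 0) G (fun y =>
    lam / 2 * h y + / (2 * lam) * (Rpower y (- (2 * alpha)) / y)
    + 2 * B1 / (1 - beta) * (Rpower y (- beta) / y))); [lra | | |].
  + intros y hy. apply outgoing_remainder_deriv; lra.
  + intros y hy. assert (hy0 : 0 < y) by lra.
    pose proof (derivable_pt_lim_minus _ _ _ _ _
      (derivable_pt_lim_minus _ _ _ _ _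
         (derivable_pt_lim_scal _ (lam / 2) _ _
            (derivable_pt_lim_RInt h R0 y hR0 hy0 velocity_energy_density_continuous))
         (derivable_pt_lim_scal _ (/ (4 * alpha * lam)) _ _
            (derivable_pt_lim_power y (- (2 * alpha)) hy0)))
      (derivable_pt_lim_scal _ (2 * B1 / (beta * (1 - beta))) _ _
         (derivable_pt_lim_power y (- beta) hy0))) as H.
    refine (eq_ind _ (derivable_pt_lim _ y) H _ _).
    rewrite !Rpower_sub_1 by exact hy0. field. lra.
  + intros y hy. apply outgoing_remainder_deriv_bound; lra.
- assert (hRa : 0 <= RInt h R0 a).
  { apply RInt_ge_0; [lra | apply ex_RInt_velocity_energy_density; lra |].
    intros z hz. apply Rmult_le_pos; [left; apply Rpower_gt_0 | apply pow2_ge_0]. }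
  assert (0 < / (4 * alpha * lam)) by (apply Rinv_0_lt_compat; nra).
  assert (0 < 2 * B1 / (beta * (1 - beta))) by (apply Rdiv_lt_0_compat; nra).
  pose proof (Rpower_gt_0 b (- (2 * alpha))); pose proof (Rpower_gt_0 b (- beta)).
  unfold G. nra.
Qed.

Variables (A1 : R) (u0 u1 : R -> R).
Hypothesis hA1 : 0 < A1.
Hypothesis hinit : forall r, 0 < r -> v r 0 = u0 r /\ vt r 0 = u1 r.
Hypothesis hu0 : forall r, R0 < r -> Rabs (u0 r) <= A1 * Rpower r (-1 - alpha).
Hypothesis hu1 : forall (M : R)
  (pr : Riemann_integrable (fun r => Rpower r (3 + 2 * alpha) * (u1 r) ^ 2) R0 M),
  R0 < M -> 4 * PI * RiemannInt pr <= A1 ^ 2.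

Lemma initial_displacement_bound a y : R0 < a <= y ->
  Rabs (y * v y 0) <= A1 * Rpower a (- alpha).
Proof.
intros hay.
rewrite (proj1 (hinit y ltac:(lra))), Rabs_mult, (Rabs_right y) by lra.
assert (hy : y * Rpower y (-1 - alpha) = Rpower y (- alpha)).
{ replace (-1 - alpha) with (- alpha - 1) by ring.
  rewrite Rpower_sub_1 by lra. field. lra. }
apply Rle_trans with (y * (A1 * Rpower y (-1 - alpha))).
- apply Rmult_le_compat_l; [lra | apply hu0; lra].
- replace (y * (A1 * Rpower y (-1 - alpha))) with (A1 * (y * Rpower y (-1 - alpha)))
    by ring.
  rewrite hy. apply Rmult_le_compat_l; [lra | apply Rpower_opp_le; lra].
Qed.

Lemma velocity_energy_bound M : R0 < M ->
  RInt velocity_energy_density R0 M <= A1 ^ 2 / 8.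
Proof.
intros hM.
set (g r := Rpower r (3 + 2 * alpha) * (u1 r) ^ 2).
assert (hext : forall x, Rmin R0 M < x < Rmax R0 M -> velocity_energy_density x = g x).
{ intros x hx. rewrite Rmin_left, Rmax_right in hx by lra.
  unfold velocity_energy_density, g. rewrite (proj2 (hinit x ltac:(lra))). reflexivity. }
assert (hg : ex_RInt g R0 M)
  by (apply (ex_RInt_ext _ _ _ _ hext), ex_RInt_velocity_energy_density; lra).
rewrite (RInt_ext _ _ _ _ hext), (RInt_Reals g R0 M (ex_RInt_Reals_0 _ _ _ hg)).
assert (hE := hu1 M (ex_RInt_Reals_0 _ _ _ hg) hM).
set (I := RiemannInt _) in *.
pose proof PI2_1.
destruct (Rle_or_lt 0 I); [assert (0 <= (PI - 2) * I) by (apply Rmult_le_pos; lra) |]; nra.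
Qed.

Lemma weighted_solution_bound r t : 0 <= t <= T -> R0 + t < r ->
  Rabs (r * v r t) <= (2 + / (8 * alpha) + / (beta * (1 - beta)))
    * (A1 * Rpower (r - t) (- alpha) + B1 * Rpower (r - t) (- beta)).
Proof.
intros ht hrt.
set (a := r - t); set (b := r + t).
set (X := Rpower a (- alpha)); set (Y := Rpower a (- beta)).
assert (hX : 0 < X) by apply Rpower_gt_0.
assert (hY : 0 < Y) by apply Rpower_gt_0.
(* [lam] balances the two Young terms, both becoming of size [A1 X]. *)
set (lam := X / A1).
assert (hlam : 0 < lam) by (apply Rdiv_lt_0_compat; lra).
assert (hinc := outgoing_remainder_increment_bound lam a b hlam
  ltac:(unfold a, b; lra) ltac:(unfold a, b; lra)).
assert (hdalembert : outgoing_remainder a b - outgoing_remainder a a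
                     = 2 * (r * v r t) - b * v b 0 - a * v a 0).
{ unfold outgoing_remainder.
  replace ((b + a) / 2) with r by (unfold a, b; field).
  replace ((b - a) / 2) with t by (unfold a, b; field).
  replace ((a + a) / 2) with a by field.
  replace ((a - a) / 2) with 0 by field.
  unfold a, b; ring. }
assert (henergy : lam / 2 * RInt velocity_energy_density R0 b <= A1 * X / 16).
{ apply Rle_trans with (lam / 2 * (A1 ^ 2 / 8)).
  - apply Rmult_le_compat_l; [lra | apply velocity_energy_bound; unfold b; lra].
  - right. unfold lam. field. lra. }
assert (hyoung : / (4 * alpha * lam) * Rpower a (- (2 * alpha)) = 2 * / (8 * alpha) * (A1 * X)).
{ replace (- (2 * alpha)) with (- alpha + - alpha) by ring.
  rewrite Rpower_plus. fold X. unfold lam. field. lra. }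
assert (hsource : 2 * B1 / (beta * (1 - beta)) * Y = 2 * / (beta * (1 - beta)) * (B1 * Y))
  by (field; lra).
rewrite hdalembert, hyoung in hinc. fold Y in hinc. rewrite hsource in hinc.
assert (ha := initial_displacement_bound a a ltac:(unfold a; lra)).
assert (hb := initial_displacement_bound a b ltac:(unfold a, b; lra)).
fold X in ha, hb.
assert (0 <= / (8 * alpha) * (B1 * Y))
  by (apply Rmult_le_pos; [left; apply Rinv_0_lt_compat |]; nra).
assert (0 <= / (beta * (1 - beta)) * (A1 * X))
  by (apply Rmult_le_pos; [left; apply Rinv_0_lt_compat |]; nra).
revert hinc ha hb. unfold Rabs. repeat destruct Rcase_abs; intros; nra.
Qed.

End RadialWave.

Theorem lemma4p1 :
  forall alpha beta : R,
    0 < alpha < 1/2 -> 0 < beta < 1/2 ->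
  exists C : R, 1 <= C /\
  forall (T R0 A1 B1 : R) (u0 u1 : R -> R) (f v vr vt vrr vrt vtt : R -> R -> R),
    0 < T -> 0 < R0 -> 0 < A1 -> 0 < B1 ->
    (* u(x,t) = v(|x|,t) is a C^2 radial solution of u_tt - Delta u = F *)
    C2_profile v vr vt vrr vrt vtt ->
    (forall r t, 0 < r -> 0 <= t <= T ->
        vtt r t - radial_laplacian vr vrr r t = f r t) ->
    (forall r, 0 < r -> v r 0 = u0 r /\ vt r 0 = u1 r) ->
    (* |u0(x)| <= A1 |x|^(-1-alpha) for |x| > R *)
    (forall r, R0 < r -> Rabs (u0 r) <= A1 * Rpower r (-1 - alpha)) ->
    (* |F(x,t)| <= B1 |x|^(-3) (|x|-t)^(-beta) for |x| > R, t in [0,T] *)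
    (forall r t, R0 < r -> 0 <= t <= T -> t < r ->
        Rabs (f r t) <= B1 * Rpower r (-3) * Rpower (r - t) (- beta)) ->
    (* int_{|x|>R} |x|^(1+2 alpha) |u1(x)|^2 dx
         = 4 pi int_R^oo r^(3+2 alpha) u1(r)^2 dr <= A1^2 *)
    (forall (M : R)
       (pr : Riemann_integrable (fun r => Rpower r (3 + 2 * alpha) * (u1 r)^2) R0 M),
        R0 < M -> 4 * PI * RiemannInt pr <= A1 ^ 2) ->
    forall r t, 0 <= t <= T -> R0 + t < r ->
      Rabs (v r t) <=
        C / r * (A1 * Rpower (r - t) (- alpha) + B1 * Rpower (r - t) (- beta)).
Proof.
intros alpha beta halpha hbeta.
set (C := 2 + / (8 * alpha) + / (beta * (1 - beta))).
exists C; split.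
{ assert (0 < / (8 * alpha)) by (apply Rinv_0_lt_compat; lra).
  assert (0 < / (beta * (1 - beta))) by (apply Rinv_0_lt_compat; nra).
  unfold C; lra. }
intros T R0 A1 B1 u0 u1 f v vr vt vrr vrt vtt _ hR0 hA1 hB1 hv hpde hinit hu0 hf hu1
  r t ht hrt.
assert (hw := weighted_solution_bound v vr vt vrr vrt vtt f T hv hpde R0 B1 beta
  hR0 hB1 ltac:(lra) hf alpha ltac:(lra) A1 u0 u1 hA1 hinit hu0 hu1 r t ht hrt).
rewrite Rabs_mult, (Rabs_right r) in hw by lra.
apply Rmult_le_reg_l with r; [lra |].
replace (r * (C / r * (A1 * Rpower (r - t) (- alpha) + B1 * Rpower (r - t) (- beta))))
  with (C * (A1 * Rpower (r - t) (- alpha) + B1 * Rpower (r - t) (- beta)))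
  by (field; lra).
exact hw.
Qed.
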